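(* Let $H_A,H_B,H_C,H_D$ be finite-dimensional Hilbert spaces, let $|\psi_{AB}\rangle\in H_A\otimes H_B$ and $|\phi_{CD}\rangle\in H_C\otimes H_D$ be unit vectors with Schmidt decompositions $|\psi_{AB}\rangle=\sum_i\lambda_i|i_Ai_B\rangle$ and $|\phi_{CD}\rangle=\sum_j\mu_j|j_Cj_D\rangle$ (Schmidt coefficients $\lambda_i,\mu_j\ge 0$), and let $\rho_{AB}=|\psi_{AB}\rangle\langle\psi_{AB}|$, $\rho_{CD}=|\phi_{CD}\rangle\langle\phi_{CD}|$. Then $$N_H^{b}(\rho_{AB}\otimes\rho_{CD})=1-\sum_{i,j}\lambda_i^4\mu_j^4 .$$
   Context: For states $\rho_{AB}$ on $H_A\otimes H_B$ and $\rho_{CD}$ on $H_C\otimes H_D$, the nonbilocality measure is defined as $$N_H^{b}(\rho_{AB}\otimes\rho_{CD})=\max_{\Pi^{BC}}\big\|\sqrt{\rho_{AB}\otimes\rho_{CD}}-\Pi^{BC}(\sqrt{\rho_{AB}\otimes\rho_{CD}})\big\|^2,$$ where $\|X\|=\sqrt{\mathrm{tr}(X^\dagger X)}$ is the Hilbert–Schmidt norm, the maximum is over all von Neumann (complete rank-one projective) measurements $\Pi^{BC}=\{\Pi^{BC}_h\}$ on $H_B\otimes H_C$ that leave $\rho_{BC}=\mathrm{tr}_{AD}(\rho_{AB}\otimes\rho_{CD})=\rho_B\otimes\rho_C$ invariant, i.e. $\sum_h\Pi^{BC}_h\rho_{BC}\Pi^{BC}_h=\rho_{BC}$, and $\Pi^{BC}(X)=\sum_h(I^A\otimes\Pi^{BC}_h\otimes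 I^D)X(I^A\otimes\Pi^{BC}_h\otimes I^D)$ (with the tensor factors ordered $A,B,C,D$). *)

From HB Require Import structures.
From mathcomp Require Import all_boot all_order all_algebra.
From mathcomp Require Import mxtens complex.
From mathcomp Require Import reals.

Set Implicit Arguments.
Unset Strict Implicit.
Unset Printing Implicit Defensive.

Import Order.TTheory GRing.Theory Num.Theory.
Local Open Scope ring_scope.

Section QDefs.
Variable C : numClosedFieldType.

Definition adjmx (m n : nat) (A : 'M[C]_(m, n)) : 'M[C]_(n, m) :=
  (map_mx Num.conj A)^T.

Definition hs_norm2 (n : nat) (X : 'M[C]_n) : C := \tr (adjmx X *m X).

Definition unit_vec (n : nat) (v : 'cV[C]_n) : Prop := (adjmx v *m v) 0 0 = 1.

Definition orthonormal_fam (k n : nat) (e : 'I_k -> 'cV[C]_n) : Prop :=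
  forall i j, (adjmx (e i) *m e j) 0 0 = (i == j)%:R.

Definition psdmx (n : nat) (A : 'M[C]_n) : Prop :=
  adjmx A = A /\ forall v : 'cV[C]_n, 0 <= (adjmx v *m A *m v) 0 0.

Definition is_sqrtmx (n : nat) (A S : 'M[C]_n) : Prop := psdmx S /\ S *m S = A.

(* partial traces over the first / second tensor factor
   (tensor index convention of mxtens: (i, j) |-> i * n + j) *)
Definition ptr1 (m n : nat) (M : 'M[C]_(m * n)) : 'M[C]_n :=
  \matrix_(j, j') \sum_(i < m) M (mxtens_index (i, j)) (mxtens_index (i, j')).
Definition ptr2 (m n : nat) (M : 'M[C]_(m * n)) : 'M[C]_m :=
  \matrix_(i, i') \sum_(j < n) M (mxtens_index (i, j)) (mxtens_index (i', j)).

(* von Neumann (complete rank-one projective) measurement on a space of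
   dimension d: rank-one orthogonal projectors summing to the identity.
   Such a family has exactly d members, whence the index type 'I_d. *)
Definition vN_meas (d : nat) (P : 'I_d -> 'M[C]_d) : Prop :=
  (forall h, [/\ adjmx (P h) = P h, P h *m P h = P h & \rank (P h) = 1%N])
  /\ \sum_(h < d) P h = 1%:M.

Definition meas_invariant (d : nat) (P : 'I_d -> 'M[C]_d) (sigma : 'M[C]_d) :=
  \sum_(h < d) P h *m sigma *m P h = sigma.

Section Four.
Variables dA dB dC dD : nat.

Definition dimABCD_1 : (dA * dB * (dC * dD) = dA * dB * dC * dD)%N :=
  mulnA (dA * dB) dC dD.
Definition dimABCD_2 : (dA * (dB * dC) * dD = dA * dB * dC * dD)%N :=
  congr1 (fun x => x * dD)%N (mulnA dA dB dC).

Definition tens_ABCD (rAB : 'M[C]_(dA * dB)) (rCD : 'M[C]_(dC * dD))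
  : 'M[C]_(dA * dB * dC * dD) :=
  castmx (dimABCD_1, dimABCD_1) (rAB *t rCD).

Definition embed_BC (Q : 'M[C]_(dB * dC)) : 'M[C]_(dA * dB * dC * dD) :=
  castmx (dimABCD_2, dimABCD_2) ((1%:M : 'M[C]_dA) *t Q *t (1%:M : 'M[C]_dD)).

Definition Pi_BC (P : 'I_(dB * dC) -> 'M[C]_(dB * dC))
  (X : 'M[C]_(dA * dB * dC * dD)) : 'M[C]_(dA * dB * dC * dD) :=
  \sum_(h < dB * dC) embed_BC (P h) *m X *m embed_BC (P h).

(* "N_H^b(rho_AB (x) rho_CD) = v": v is the maximum of
   || sqrt(rho_AB (x) rho_CD) - Pi^{BC}(sqrt(rho_AB (x) rho_CD)) ||^2 over all
   von Neumann measurements Pi^{BC} on H_B (x) H_C leaving rho_B (x) rho_C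
   invariant; sqrtR is the square root of rho_AB (x) rho_CD. *)
Definition NHb_is (rAB : 'M[C]_(dA * dB)) (rCD : 'M[C]_(dC * dD))
  (sqrtR : 'M[C]_(dA * dB * dC * dD)) (v : C) : Prop :=
  let rBC := ptr1 rAB *t ptr2 rCD in
  let admissible P := vN_meas P /\ meas_invariant P rBC in
  (exists P, admissible P /\ hs_norm2 (sqrtR - Pi_BC P sqrtR) = v) /\
  (forall P, admissible P -> hs_norm2 (sqrtR - Pi_BC P sqrtR) <= v).

End Four.
End QDefs.

(* The state [rho = rho_AB (x) rho_CD] is the pure state [|Psi><Psi|] with
   [Psi = psi (x) phi], so its positive square root is [rho] itself. The
   projectors [E_h = I (x) Pi_h (x) I] are Hermitian and mutually orthogonal,
   whence [||rho - sum_h E_h rho E_h||^2 = 1 - sum_h <Psi|E_h|Psi>^2], and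
   [<Psi|E_h|Psi> = tr (Pi_h sigma)] for [sigma = rho_B (x) rho_C]. Invariance
   of [sigma] makes each rank-one [Pi_h] commute with [sigma], so
   [Pi_h sigma Pi_h = tr (Pi_h sigma) Pi_h] and
   [sum_h tr (Pi_h sigma)^2 = tr sigma^2 = (sum_i lambda_i^4) (sum_j mu_j^4)].
   The value therefore does not depend on the admissible measurement, and an
   admissible one exists: measure in an eigenbasis of [sigma]. *)

From HB Require Import structures.
From mathcomp Require Import all_boot all_order all_algebra.
From mathcomp Require Import mxtens complex.
From mathcomp Require Import reals.
From mathcomp Require Import sesquilinear spectral.
Set Implicit Arguments.
Unset Strict Implicit.
Unset Printing Implicit Defensive.
Import Order.TTheory GRing.Theory Num.Theory.
Local Open Scope ring_scope.

Section Adjoint.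
Variable C : numClosedFieldType.
Implicit Types m n p q : nat.

Lemma adjmx_is_zmod_morphism m n : zmod_morphism (@adjmx C m n).
Proof. by move=> A B; apply/matrixP=> i j; rewrite !mxE rmorphB. Qed.

HB.instance Definition _ m n := GRing.isZmodMorphism.Build 'M[C]_(m, n) 'M[C]_(n, m)
  (@adjmx C m n) (@adjmx_is_zmod_morphism m n).

Lemma adjmxK m n (A : 'M[C]_(m, n)) : adjmx (adjmx A) = A.
Proof. by apply/matrixP=> i j; rewrite !mxE conjCK. Qed.

Lemma adjmxM m n p (A : 'M[C]_(m, n)) (B : 'M[C]_(n, p)) :
  adjmx (A *m B) = adjmx B *m adjmx A.
Proof. by rewrite /adjmx map_mxM trmx_mul. Qed.

Lemma adjmxZ m n a (A : 'M[C]_(m, n)) : adjmx (a *: A) = a^* *: adjmx A.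
Proof. by apply/matrixP=> i j; rewrite !mxE rmorphM. Qed.

Lemma adjmx1 n : adjmx (1%:M : 'M[C]_n) = 1%:M.
Proof. by apply/matrixP=> i j; rewrite !mxE rmorph_nat eq_sym. Qed.

Lemma adjmx_tens m n p q (A : 'M[C]_(m, n)) (B : 'M[C]_(p, q)) :
  adjmx (A *t B) = adjmx A *t adjmx B.
Proof. by apply/matrixP=> i j; rewrite !mxE rmorphM. Qed.

Lemma adjmx_cast m n m' n' (em : m = m') (en : n = n') (A : 'M[C]_(m, n)) :
  adjmx (castmx (em, en) A) = castmx (en, em) (adjmx A).
Proof. by apply/matrixP=> i j; rewrite !(castmxE, mxE). Qed.

Lemma adjmx_trmxC m n (A : 'M[C]_(m, n)) : adjmx A = (A ^t*)%sesqui.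
Proof. by rewrite /adjmx map_trmx. Qed.

Lemma adjmx_outer n (v : 'cV[C]_n) : adjmx (v *m adjmx v) = v *m adjmx v.
Proof. by rewrite adjmxM adjmxK. Qed.

Lemma unit_vecE n (v : 'cV[C]_n) : unit_vec v -> adjmx v *m v = 1%:M.
Proof. by move=> v_unit; rewrite [LHS]mx11_scalar v_unit. Qed.

Lemma orthonormal_famE n k (e : 'I_k -> 'cV[C]_n) i j : orthonormal_fam e ->
  adjmx (e i) *m e j = (i == j)%:R%:M.
Proof. by move=> e_on; rewrite [LHS]mx11_scalar e_on. Qed.

Lemma hs_norm2E n (M : 'M[C]_n) : hs_norm2 M = \sum_i \sum_j `|M j i| ^+ 2.
Proof.
apply: eq_bigr => i _; rewrite !mxE; apply: eq_bigr => j _.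
by rewrite !mxE normCK mulrC.
Qed.

Lemma hs_norm2_ge0 n (M : 'M[C]_n) : 0 <= hs_norm2 M.
Proof. by rewrite hs_norm2E; do 2!apply: sumr_ge0 => ? _; apply: exprn_ge0. Qed.

Lemma hs_norm2_eq0 n (M : 'M[C]_n) : (hs_norm2 M == 0) = (M == 0).
Proof.
apply/idP/eqP=> [|->]; last by rewrite /hs_norm2 mulmx0 mxtrace0.
rewrite hs_norm2E psumr_eq0 => [/allP M0|i _]; last first.
  by apply: sumr_ge0 => j _; apply: exprn_ge0.
apply/matrixP=> j i; have /implyP/(_ isT) := M0 i (mem_index_enum _).
rewrite psumr_eq0 => [/allP/(_ j (mem_index_enum _))/implyP/(_ isT)|k _].
  by rewrite sqrf_eq0 normr_eq0 mxE => /eqP.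
exact: exprn_ge0.
Qed.

End Adjoint.

Section PartialTrace.
Variable C : numClosedFieldType.
Implicit Types m n : nat.

Lemma sum_mxtens_index (V : nmodType) m n (F : 'I_(m * n) -> V) :
  \sum_k F k = \sum_i \sum_j F (mxtens_index (i, j)).
Proof.
rewrite pair_big (reindex (@mxtens_index m n)) /=; first by apply: eq_bigr => -[].
by exists (@mxtens_unindex m n) => k _; rewrite (mxtens_indexK, mxtens_unindexK).
Qed.

Lemma sum_cast_ord (V : nmodType) n n' (e : n = n') (F : 'I_n' -> V) :
  \sum_(k < n') F k = \sum_(k < n) F (cast_ord e k).
Proof. by case: n' / e F => F; apply: eq_bigr => k _; rewrite cast_ord_id. Qed.

Lemma mxtrace_tens m n (A : 'M[C]_m) (B : 'M[C]_n) : \tr (A *t B) = \tr A * \tr B.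
Proof.
rewrite /mxtrace sum_mxtens_index mulr_suml; apply: eq_bigr => i _.
by rewrite mulr_sumr; apply: eq_bigr => j _; rewrite tensmxE.
Qed.

Lemma mxtrace11 (M : 'M[C]_1) : \tr M = M 0 0.
Proof. exact: big_ord1. Qed.

Lemma ptr1_is_linear m n : linear (@ptr1 C m n).
Proof.
move=> a A B; apply/matrixP=> j j'; rewrite !mxE mulr_sumr -big_split.
by apply: eq_bigr => i _; rewrite !mxE.
Qed.

HB.instance Definition _ m n := GRing.isLinear.Build C 'M[C]_(m * n) 'M[C]_n
  *:%R (@ptr1 C m n) (@ptr1_is_linear m n).

Lemma ptr2_is_linear m n : linear (@ptr2 C m n).
Proof.
move=> a A B; apply/matrixP=> i i'; rewrite !mxE mulr_sumr -big_split.
by apply: eq_bigr => j _; rewrite !mxE.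
Qed.

HB.instance Definition _ m n := GRing.isLinear.Build C 'M[C]_(m * n) 'M[C]_m
  *:%R (@ptr2 C m n) (@ptr2_is_linear m n).

Lemma ptr1_tens m n (A : 'M[C]_m) (B : 'M[C]_n) : ptr1 (A *t B) = \tr A *: B.
Proof.
apply/matrixP => j j'; rewrite !mxE mulr_suml.
by apply: eq_bigr => i _; rewrite tensmxE.
Qed.

Lemma ptr2_tens m n (A : 'M[C]_m) (B : 'M[C]_n) : ptr2 (A *t B) = \tr B *: A.
Proof.
apply/matrixP => i i'; rewrite !mxE mulr_suml.
by apply: eq_bigr => j _; rewrite tensmxE mulrC.
Qed.

Lemma adjmx_ptr1 m n (M : 'M[C]_(m * n)) : adjmx (ptr1 M) = ptr1 (adjmx M).
Proof.
by apply/matrixP=> j j'; rewrite !mxE rmorph_sum; apply: eq_bigr => i _; rewrite !mxE.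
Qed.

Lemma adjmx_ptr2 m n (M : 'M[C]_(m * n)) : adjmx (ptr2 M) = ptr2 (adjmx M).
Proof.
by apply/matrixP=> i i'; rewrite !mxE rmorph_sum; apply: eq_bigr => j _; rewrite !mxE.
Qed.

End PartialTrace.

Lemma castmx_mulmx (R : pzRingType) m n p m' n' p' (em : m = m') (en : n = n')
    (ep : p = p') (A : 'M[R]_(m, n)) (B : 'M[R]_(n, p)) :
  castmx (em, en) A *m castmx (en, ep) B = castmx (em, ep) (A *m B).
Proof. by case: m' / em; case: n' / en; case: p' / ep; rewrite !castmx_id. Qed.

Section FourParty.
Variable C : numClosedFieldType.
Variables dA dB dC dD : nat.

Definition idx4 (a : 'I_dA) (b : 'I_dB) (c : 'I_dC) (d : 'I_dD) :
    'I_(dA * dB * dC * dD) :=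
  cast_ord (dimABCD_2 dA dB dC dD)
    (mxtens_index (mxtens_index (a, mxtens_index (b, c)), d)).

Lemma sum_idx4 (V : nmodType) (F : 'I_(dA * dB * dC * dD) -> V) :
  \sum_k F k = \sum_a \sum_b \sum_c \sum_d F (idx4 a b c d).
Proof.
rewrite (sum_cast_ord (dimABCD_2 dA dB dC dD)) !sum_mxtens_index.
by apply: eq_bigr => a _; rewrite sum_mxtens_index.
Qed.

Lemma embed_BC_idx4 (Q : 'M[C]_(dB * dC)) a b c d a' b' c' d' :
  embed_BC dA dD Q (idx4 a b c d) (idx4 a' b' c' d') =
  (a == a')%:R * Q (mxtens_index (b, c)) (mxtens_index (b', c')) * (d == d')%:R.
Proof. by rewrite castmxE !cast_ordK !tensmxE !mxE. Qed.

Lemma tens_ABCD_idx4 (X : 'M[C]_(dA * dB)) (Y : 'M[C]_(dC * dD)) a b c d a' b' c' d' :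
  tens_ABCD X Y (idx4 a b c d) (idx4 a' b' c' d') =
  X (mxtens_index (a, b)) (mxtens_index (a', b')) *
  Y (mxtens_index (c, d)) (mxtens_index (c', d')).
Proof.
have reassoc a1 b1 c1 d1 : cast_ord (esym (dimABCD_1 dA dB dC dD)) (idx4 a1 b1 c1 d1) =
    mxtens_index (mxtens_index (a1, b1), mxtens_index (c1, d1)).
  by apply: val_inj => /=; rewrite !mulnDl !mulnA !addnA.
by rewrite castmxE !reassoc tensmxE.
Qed.

Lemma sum_delta_AD (a : 'I_dA) (d : 'I_dD) (q : 'I_dB -> 'I_dC -> C)
    (F : 'I_dA -> 'I_dB -> 'I_dC -> 'I_dD -> C) :
  \sum_a' \sum_b' \sum_c' \sum_d' (a == a')%:R * q b' c' * (d == d')%:R * F a' b' c' d'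
  = \sum_b' \sum_c' q b' c' * F a b' c' d.
Proof.
rewrite (bigD1 a) //= [X in _ + X]big1 ?addr0 => [|a' /negPf neq_a]; last first.
  by rewrite eq_sym neq_a; do 3!(apply: big1 => ? _); rewrite !mul0r.
do 2!(apply: eq_bigr => ? _); rewrite (bigD1 d) //= [X in _ + X]big1 ?addr0.
  by rewrite !eqxx mul1r mulr1.
by move=> d' /negPf neq_d; rewrite eq_sym neq_d mulr0 mul0r.
Qed.

Lemma mxtrace_embed_BC_mul (Q : 'M[C]_(dB * dC)) (M : 'M[C]_(dA * dB * dC * dD)) :
  \tr (embed_BC dA dD Q *m M) = \sum_a \sum_b \sum_c \sum_d \sum_b' \sum_c'
    Q (mxtens_index (b, c)) (mxtens_index (b', c')) * M (idx4 a b' c' d) (idx4 a b c d).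
Proof.
rewrite /mxtrace sum_idx4; do 4!(apply: eq_bigr => ? _); rewrite mxE sum_idx4.
under eq_bigr => a' _ do under eq_bigr => b' _ do under eq_bigr => c' _ do
  under eq_bigr => d' _ do rewrite embed_BC_idx4.
exact: sum_delta_AD.
Qed.

Lemma mxtrace_embed_BC_tens (Q : 'M[C]_(dB * dC)) (X : 'M[C]_(dA * dB))
    (Y : 'M[C]_(dC * dD)) :
  \tr (embed_BC dA dD Q *m tens_ABCD X Y) = \tr (Q *m (ptr1 X *t ptr2 Y)).
Proof.
rewrite mxtrace_embed_BC_mul /mxtrace !sum_mxtens_index.
rewrite exchange_big; apply: eq_bigr => b _; rewrite exchange_big; apply: eq_bigr => c _.
rewrite mxE !sum_mxtens_index.
under eq_bigr => a _ do rewrite exchange_big.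
under eq_bigr => a _ do under eq_bigr => b' _ do rewrite exchange_big.
rewrite exchange_big; apply: eq_bigr => b' _; rewrite exchange_big; apply: eq_bigr => c' _.
rewrite tensmxE !mxE mulr_suml mulr_sumr; apply: eq_bigr => a _.
rewrite !mulr_sumr; apply: eq_bigr => d _.
by rewrite tens_ABCD_idx4 mulrA.
Qed.

Lemma embed_BC_mul (P Q : 'M[C]_(dB * dC)) :
  embed_BC dA dD P *m embed_BC dA dD Q = embed_BC dA dD (P *m Q).
Proof. by rewrite castmx_mulmx !tensmx_mul !mulmx1. Qed.

Lemma adjmx_embed_BC (Q : 'M[C]_(dB * dC)) :
  adjmx (embed_BC dA dD Q) = embed_BC dA dD (adjmx Q).
Proof. by rewrite adjmx_cast !adjmx_tens !adjmx1. Qed.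

Lemma embed_BC0 : embed_BC dA dD (0 : 'M[C]_(dB * dC)) = 0.
Proof. by apply/matrixP=> i j; rewrite castmxE tensmx0 tens0mx !mxE. Qed.

End FourParty.

Section PureState.
Variable C : numClosedFieldType.
Variable n : nat.
Implicit Types (u : 'cV[C]_n) (w : 'rV[C]_n) (X : 'M[C]_n).

Lemma outer_sandwich u w X : u *m w *m X *m (u *m w) = \tr (u *m w *m X) *: (u *m w).
Proof.
have -> : u *m w *m X *m (u *m w) = u *m (w *m X *m u) *m w by rewrite !mulmxA.
rewrite [w *m X *m u]mx11_scalar mul_mx_scalar -scalemxAl; congr (_ *: _).
by rewrite -!mulmxA mxtrace_mulC !mulmxA mxtrace11.
Qed.

Variable v : 'cV[C]_n.
Hypothesis v_unit : adjmx v *m v = 1%:M.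

Lemma outer_idem : v *m adjmx v *m (v *m adjmx v) = v *m adjmx v.
Proof. by rewrite mulmxA -(mulmxA v) v_unit mulmx1. Qed.

Lemma mxtrace_outer : \tr (v *m adjmx v) = 1.
Proof. by rewrite mxtrace_mulC v_unit mxtrace1. Qed.

Lemma hs_norm2_outer_sub_pinch k (E : 'I_k -> 'M[C]_n) :
    (forall h, adjmx (E h) = E h) ->
    (forall h l, E h *m E l = if h == l then E h else 0) ->
  hs_norm2 (v *m adjmx v - \sum_h E h *m (v *m adjmx v) *m E h) =
  1 - \sum_h \tr (E h *m (v *m adjmx v)) ^+ 2.
Proof.
move=> E_adj E_orth; set rho := v *m adjmx v.
have rho_adj : adjmx rho = rho := adjmx_outer v.
have rho_idem : rho *m rho = rho := outer_idem.
have tr_rho : \tr rho = 1 := mxtrace_outer.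
set a := fun h => \tr (E h *m rho).
have rEr h : rho *m E h *m rho = a h *: rho.
  by rewrite /rho outer_sandwich -/rho mxtrace_mulC.
clearbody rho.
have tr_rErE h : \tr (rho *m E h *m rho *m E h) = a h ^+ 2.
  by rewrite rEr -scalemxAl mxtraceZ mxtrace_mulC expr2.
set X := \sum_h E h *m rho *m E h.
have X_adj : adjmx X = X.
  rewrite /X raddf_sum /=; apply: eq_bigr => h _.
  by rewrite !adjmxM E_adj rho_adj mulmxA.
have tr_rhoX : \tr (rho *m X) = \sum_h a h ^+ 2.
  rewrite /X mulmx_sumr raddf_sum /=; apply: eq_bigr => h _.
  by rewrite !mulmxA tr_rErE.
have tr_XX : \tr (X *m X) = \sum_h a h ^+ 2.
  rewrite /X mulmx_suml raddf_sum /=; apply: eq_bigr => h _.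
  rewrite mulmx_sumr (bigD1 h) //= [X in _ + X]big1 ?addr0 => [|l /negPf neq_hl].
    rewrite !mulmxA -(mulmxA _ (E h) (E h)) E_orth eqxx.
    by rewrite mxtrace_mulC !mulmxA E_orth eqxx mxtrace_mulC !mulmxA tr_rErE.
  by rewrite !mulmxA -(mulmxA _ (E h)) E_orth eq_sym neq_hl mulmx0 !mul0mx.
rewrite /hs_norm2 [adjmx _]raddfB /= rho_adj X_adj mulmxBl !mulmxBr !raddfB /=.
by rewrite rho_idem tr_rho (mxtrace_mulC X) tr_rhoX tr_XX subrr addr0.
Qed.

Lemma sqrtmx_outer S : is_sqrtmx (v *m adjmx v) S -> S = v *m adjmx v.
Proof.
move=> [[S_adj S_psd] S2]; set rho := v *m adjmx v in S2 *.
have rho_adj : adjmx rho = rho := adjmx_outer v.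
have rho_idem : rho *m rho = rho := outer_idem.
have tr_rho : \tr rho = 1 := mxtrace_outer.
set c := \tr (rho *m S).
have rSr : rho *m S *m rho = c *: rho by rewrite /rho outer_sandwich.
have c_ge0 : 0 <= c by rewrite /c /rho -mulmxA mxtrace_mulC mxtrace11 S_psd.
clearbody rho.
have S_rho : S *m rho = S.
  have /eqP : hs_norm2 (S *m (1%:M - rho)) = 0.
    rewrite /hs_norm2 adjmxM [adjmx _]raddfB /= adjmx1 rho_adj S_adj.
    by rewrite mulmxA -(mulmxA _ S S) S2 mulmxBl mul1mx rho_idem subrr mul0mx mxtrace0.
  by rewrite hs_norm2_eq0 mulmxBr mulmx1 subr_eq0 => /eqP.
have rho_S : rho *m S = S by rewrite -[LHS]adjmxK adjmxM S_adj rho_adj S_rho.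
have S_c : S = c *: rho by rewrite -rSr rho_S S_rho.
have c2 : c ^+ 2 = 1.
  have := congr1 mxtrace S2.
  by rewrite {1 2}S_c -scalemxAl -scalemxAr rho_idem scalerA mxtraceZ tr_rho mulr1.
suff c1 : c = 1 by rewrite S_c c1 scale1r.
by move/eqP: c2; rewrite pexpr_eq1 // => /eqP.
Qed.

End PureState.

Section VonNeumann.
Variable C : numClosedFieldType.
Variable d : nat.
Implicit Types (P : 'I_d -> 'M[C]_d) (s : 'M[C]_d).

Lemma rank1_factor (M : 'M[C]_d) : \rank M = 1%N ->
  exists (u : 'cV[C]_d) (w : 'rV[C]_d), M = u *m w.
Proof.
case: d M => [|n] M rM; first by have := rank_leq_row M; rewrite rM.
exists (col_ebase M *m delta_mx 0 (0 : 'I_1)), (delta_mx (0 : 'I_1) 0 *m row_ebase M).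
rewrite -mulmxA (mulmxA (delta_mx _ _)) mul_delta_mx mulmxA -{1}(mulmx_ebase M) rM.
congr (_ *m _ *m _); apply/matrixP => i j; rewrite !mxE.
by rewrite -!val_eqE /=; case: i j => [[|i] ?] [[|j] ?]; rewrite ?andbF.
Qed.

Lemma rank1_sandwich (M X : 'M[C]_d) : \rank M = 1%N ->
  M *m X *m M = \tr (M *m X) *: M.
Proof. by move=> /rank1_factor [u [w ->]]; rewrite outer_sandwich. Qed.

Lemma vN_meas_orth P : vN_meas P ->
  forall h l, P h *m P l = if h == l then P h else 0.
Proof.
move=> [proj_P sum_P] h l; have [P_adj P_idem _] := proj_P l.
case: eqP => [-> //|/eqP neq_hl].
(* [P l = \sum_k P l P k P l]; the terms [k != l] are [adjmx (P k *m P l) *m (P k *m P l)]. *)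
have sum_PlPkPl : \sum_(k | k != l) P l *m P k *m P l = 0.
  have : P l = \sum_k P l *m P k *m P l.
    by rewrite -mulmx_suml -mulmx_sumr sum_P mulmx1 P_idem.
  by rewrite (bigD1 l) //= !P_idem -{1}[P l]addr0 => /addrI <-.
have sum_PkPl0 : \sum_(k | k != l) hs_norm2 (P k *m P l) = 0.
  transitivity (\tr (\sum_(k | k != l) P l *m P k *m P l)).
    rewrite raddf_sum /=; apply: eq_bigr => k _; have [P_adj' P_idem' _] := proj_P k.
    by rewrite /hs_norm2 adjmxM P_adj P_adj' mulmxA -(mulmxA (P l) (P k)) P_idem'.
  by rewrite sum_PlPkPl mxtrace0.
move/eqP: sum_PkPl0; rewrite psumr_eq0 => [/allP/(_ h (mem_index_enum _))|k _].
  by rewrite neq_hl hs_norm2_eq0 => /eqP.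
exact: hs_norm2_ge0.
Qed.

Lemma vN_meas_invariant_comm P s : vN_meas P -> meas_invariant P s ->
  forall h, P h *m s = s *m P h.
Proof.
move=> vP inv_s h; have P_orth := vN_meas_orth vP.
have -> : P h *m s = P h *m s *m P h.
  rewrite -{1}inv_s mulmx_sumr (bigD1 h) //= [X in _ + X]big1 ?addr0 => [|l /negPf neq_lh].
    by rewrite !mulmxA P_orth eqxx.
  by rewrite !mulmxA P_orth eq_sym neq_lh !mul0mx.
rewrite -{2}inv_s mulmx_suml (bigD1 h) //= [X in _ + X]big1 ?addr0 => [|l /negPf neq_lh].
  by rewrite -!mulmxA P_orth eqxx.
by rewrite -!mulmxA P_orth neq_lh !mulmx0.
Qed.

Lemma vN_meas_sum_sqr_mxtrace P s : vN_meas P -> meas_invariant P s ->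
  \sum_h \tr (P h *m s) ^+ 2 = \tr (s *m s).
Proof.
move=> vP inv_s; have [proj_P sum_P] := vP.
transitivity (\sum_h \tr (P h *m (s *m s))); last first.
  by rewrite -raddf_sum /= -mulmx_suml sum_P mul1mx.
apply: eq_bigr => h _; have [_ P_idem P_rank] := proj_P h.
have -> : P h *m (s *m s) = P h *m s *m P h *m s.
  by rewrite -(mulmxA (P h) s) -(vN_meas_invariant_comm vP inv_s) !mulmxA P_idem.
by rewrite rank1_sandwich // -scalemxAl mxtraceZ expr2.
Qed.

End VonNeumann.

Section InvariantMeasurement.
Variable C : numClosedFieldType.
Variable n : nat.

Definition basis_meas (U : 'M[C]_n) (h : 'I_n) : 'M[C]_n :=
  adjmx U *m delta_mx h h *m U.

Variable U : 'M[C]_n.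
Hypothesis U_unitary : U \is unitarymx.

Let U_adjU : U *m adjmx U = 1%:M.
Proof. by rewrite adjmx_trmxC; apply/unitarymxP. Qed.

Let adjU_U : adjmx U *m U = 1%:M.
Proof. by rewrite adjmx_trmxC -invmx_unitary // mulVmx // unitarymx_unit. Qed.

Let sandwich_U (A B : 'M[C]_n) :
  adjmx U *m A *m U *m (adjmx U *m B *m U) = adjmx U *m (A *m B) *m U.
Proof. by rewrite !mulmxA -(mulmxA (adjmx U *m A) U) U_adjU mulmx1. Qed.

Lemma basis_meas_vN : vN_meas (basis_meas U).
Proof.
split=> [h|]; last by rewrite -mulmx_suml -mulmx_sumr -mx1_sum_delta mulmx1 adjU_U.
split; rewrite /basis_meas.
- rewrite !adjmxM adjmxK mulmxA; congr (_ *m _ *m _).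
  by apply/matrixP => i j; rewrite !mxE rmorph_nat andbC.
- by rewrite sandwich_U mul_delta_mx.
have U_free : row_free U by rewrite row_free_unit unitarymx_unit.
have adjU_full : row_full (adjmx U).
  by rewrite row_full_unit adjmx_trmxC -invmx_unitary // unitmx_inv unitarymx_unit.
by rewrite mxrankMfree // (eqmxMfull _ adjU_full) mxrank_delta.
Qed.

Lemma basis_meas_invariant (D : 'rV[C]_n) :
  meas_invariant (basis_meas U) (adjmx U *m diag_mx D *m U).
Proof.
rewrite /meas_invariant /basis_meas.
under eq_bigr => h _ do rewrite !sandwich_U.
rewrite -mulmx_suml -mulmx_sumr; congr (_ *m _ *m _).
rewrite [RHS]diag_mx_sum_delta; apply: eq_bigr => h _.
rewrite diag_mx_sum_delta mulmx_sumr mulmx_suml (bigD1 h) //= [X in _ + X]big1 ?addr0.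
  by rewrite -scalemxAr -scalemxAl !mul_delta_mx.
move=> i /negPf neq_ih; rewrite -scalemxAr -scalemxAl mul_delta_mx_cond eq_sym neq_ih.
by rewrite mulr0n mul0mx scaler0.
Qed.

End InvariantMeasurement.

Lemma hermitian_invariant_vN_meas (C : numClosedFieldType) n (s : 'M[C]_n) :
  adjmx s = s -> exists P, vN_meas P /\ meas_invariant P s.
Proof.
move=> s_adj; have /orthomx_spectralP s_spectral : s \is normalmx.
  by apply/normalmxP; rewrite -adjmx_trmxC s_adj.
have U_unitary := spectral_unitarymx s.
exists (basis_meas (spectralmx s)); split; first exact: basis_meas_vN.
rewrite [X in meas_invariant _ X]s_spectral invmx_unitary // -adjmx_trmxC.
exact: basis_meas_invariant.
Qed.

Section Schmidt.
Variable C : numClosedFieldType.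
Implicit Types m n k : nat.

Lemma mxtrace_sqr_orthonormal n k (c : 'I_k -> C) (e : 'I_k -> 'cV[C]_n) :
  orthonormal_fam e ->
  \tr ((\sum_i c i *: (e i *m adjmx (e i))) *m (\sum_i c i *: (e i *m adjmx (e i)))) =
  \sum_i c i ^+ 2.
Proof.
move=> e_on; rewrite mulmx_suml raddf_sum /=; apply: eq_bigr => i _.
rewrite mulmx_sumr raddf_sum /= (bigD1 i) //= [X in _ + X]big1 ?addr0 => [|j neq_ji];
  rewrite -scalemxAl -scalemxAr !mxtraceZ mulmxA -(mulmxA (e i)) orthonormal_famE //.
  by rewrite eqxx mulmx1 mxtrace_mulC orthonormal_famE // eqxx mxtrace1 mulr1 expr2.
by rewrite eq_sym (negPf neq_ji) mul_mx_scalar scale0r mul0mx mxtrace0 !mulr0.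
Qed.

Variables (m n k : nat) (lam : 'I_k -> C) (eA : 'I_k -> 'cV[C]_m) (eB : 'I_k -> 'cV[C]_n).
Variable psi : 'cV[C]_(m * n).
Hypothesis psiE : psi = \sum_i lam i *: (eA i *t eB i).

Lemma outer_schmidt : psi *m adjmx psi =
  \sum_i \sum_j (lam i * (lam j)^*) *: ((eA i *m adjmx (eA j)) *t (eB i *m adjmx (eB j))).
Proof.
rewrite psiE raddf_sum /= mulmx_suml; apply: eq_bigr => i _.
rewrite mulmx_sumr; apply: eq_bigr => j _.
rewrite adjmxZ (adjmx_tens (eA j) (eB j)) -scalemxAl -scalemxAr scalerA.
by rewrite (tensmx_mul (eA i) (eB i)).
Qed.

Lemma ptr1_schmidt : orthonormal_fam eA ->
  ptr1 (psi *m adjmx psi) = \sum_i `|lam i| ^+ 2 *: (eB i *m adjmx (eB i)).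
Proof.
move=> eA_on; rewrite outer_schmidt raddf_sum; apply: eq_bigr => i _.
rewrite raddf_sum (bigD1 i) //= [X in _ + X]big1 ?addr0 => [|j neq_ji];
  rewrite linearZ /= ptr1_tens mxtrace_mulC mxtrace11 eA_on.
  by rewrite eqxx scale1r normCK.
by rewrite (negPf neq_ji) scale0r scaler0.
Qed.

Lemma ptr2_schmidt : orthonormal_fam eB ->
  ptr2 (psi *m adjmx psi) = \sum_i `|lam i| ^+ 2 *: (eA i *m adjmx (eA i)).
Proof.
move=> eB_on; rewrite outer_schmidt raddf_sum; apply: eq_bigr => i _.
rewrite raddf_sum (bigD1 i) //= [X in _ + X]big1 ?addr0 => [|j neq_ji];
  rewrite linearZ /= ptr2_tens mxtrace_mulC mxtrace11 eB_on.
  by rewrite eqxx scale1r normCK.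
by rewrite (negPf neq_ji) scale0r scaler0.
Qed.

End Schmidt.

Section Nonbilocality.
Variable C : numClosedFieldType.
Variables dA dB dC dD : nat.

Lemma tens_ABCD_outer (psi : 'cV[C]_(dA * dB)) (phi : 'cV[C]_(dC * dD)) :
    adjmx psi *m psi = 1%:M -> adjmx phi *m phi = 1%:M ->
  exists2 Psi : 'cV[C]_(dA * dB * dC * dD), adjmx Psi *m Psi = 1%:M &
    tens_ABCD (psi *m adjmx psi) (phi *m adjmx phi) = Psi *m adjmx Psi.
Proof.
move=> psi_unit phi_unit.
exists (castmx (dimABCD_1 dA dB dC dD, muln1 1) (psi *t phi)).
  rewrite adjmx_cast castmx_mulmx adjmx_tens tensmx_mul psi_unit phi_unit.
  by apply/matrixP => i j; rewrite !ord1 castmxE !mxE mulr1.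
by rewrite adjmx_cast castmx_mulmx adjmx_tens tensmx_mul.
Qed.

Lemma hs_norm2_outer_sub_Pi_BC (rAB : 'M[C]_(dA * dB)) (rCD : 'M[C]_(dC * dD))
    (Psi : 'cV[C]_(dA * dB * dC * dD)) (P : 'I_(dB * dC) -> 'M[C]_(dB * dC)) :
    adjmx Psi *m Psi = 1%:M -> tens_ABCD rAB rCD = Psi *m adjmx Psi ->
    vN_meas P -> meas_invariant P (ptr1 rAB *t ptr2 rCD) ->
  hs_norm2 (Psi *m adjmx Psi - Pi_BC P (Psi *m adjmx Psi)) =
  1 - \tr ((ptr1 rAB *t ptr2 rCD) *m (ptr1 rAB *t ptr2 rCD)).
Proof.
move=> Psi_unit rhoE vP inv_sigma.
rewrite /Pi_BC hs_norm2_outer_sub_pinch // => [|h|h l].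
- rewrite -(vN_meas_sum_sqr_mxtrace vP inv_sigma); congr (1 - _).
  by apply: eq_bigr => h _; rewrite -rhoE mxtrace_embed_BC_tens.
- by have [P_adj _ _] := vP.1 h; rewrite adjmx_embed_BC P_adj.
rewrite embed_BC_mul vN_meas_orth //; case: eqP => // _.
exact: embed_BC0.
Qed.

End Nonbilocality.

Theorem theorem1 (R : realType) (dA dB dC dD kAB kCD : nat)
  (psi : 'cV[R[i]]_(dA * dB)) (phi : 'cV[R[i]]_(dC * dD))
  (lam : 'I_kAB -> R[i]) (eA : 'I_kAB -> 'cV[R[i]]_dA) (eB : 'I_kAB -> 'cV[R[i]]_dB)
  (mu : 'I_kCD -> R[i]) (fC : 'I_kCD -> 'cV[R[i]]_dC) (fD : 'I_kCD -> 'cV[R[i]]_dD) :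
  unit_vec psi -> unit_vec phi ->
  (forall i, 0 <= lam i) -> orthonormal_fam eA -> orthonormal_fam eB ->
  psi = \sum_(i < kAB) lam i *: (eA i *t eB i) ->
  (forall j, 0 <= mu j) -> orthonormal_fam fC -> orthonormal_fam fD ->
  phi = \sum_(j < kCD) mu j *: (fC j *t fD j) ->
  forall S : 'M[R[i]]_(dA * dB * dC * dD),
    is_sqrtmx (tens_ABCD (psi *m adjmx psi) (phi *m adjmx phi)) S ->
    NHb_is (psi *m adjmx psi) (phi *m adjmx phi) S
      (1 - \sum_(i < kAB) \sum_(j < kCD) lam i ^+ 4 * mu j ^+ 4).
Proof.
move=> psi_unit phi_unit lam_ge0 eA_on eB_on psiE mu_ge0 fC_on fD_on phiE S S_sqrt.
have [Psi Psi_unit rhoE] := tens_ABCD_outer (unit_vecE psi_unit) (unit_vecE phi_unit).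
have S_rho : S = Psi *m adjmx Psi by apply: (sqrtmx_outer Psi_unit); rewrite -rhoE.
set sigma := ptr1 (psi *m adjmx psi) *t ptr2 (phi *m adjmx phi).
have sigma_adj : adjmx sigma = sigma.
  by rewrite adjmx_tens adjmx_ptr1 adjmx_ptr2 !adjmx_outer.
have tr_sigma2 : \tr (sigma *m sigma) = \sum_i \sum_j lam i ^+ 4 * mu j ^+ 4.
  rewrite tensmx_mul mxtrace_tens (ptr1_schmidt psiE) // (ptr2_schmidt phiE) //.
  rewrite !mxtrace_sqr_orthonormal // mulr_suml; apply: eq_bigr => i _.
  by rewrite mulr_sumr; apply: eq_bigr => j _; rewrite !ger0_norm // -!exprM.
have value P : vN_meas P -> meas_invariant P sigma ->
    hs_norm2 (S - Pi_BC P S) = 1 - \sum_i \sum_j lam i ^+ 4 * mu j ^+ 4.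
  move=> vP inv_sigma.
  by rewrite S_rho (hs_norm2_outer_sub_Pi_BC Psi_unit rhoE) // tr_sigma2.
split=> [|P [vP inv_sigma]]; last by rewrite value.
have [P [vP inv_sigma]] := hermitian_invariant_vN_meas sigma_adj.
by exists P; split; last exact: value.
Qed.
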